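(* Let $(X,T)$ be a minimal Cantor system, $p\geq 1$ and $U\subseteq X$ clopen. Then for all $x,y\in X$, $$\mathrm{PS}_p(x,U)=\emptyset \iff \mathrm{PS}_p(y,U)=\emptyset .$$
   Context: A minimal Cantor system is a pair $(X,T)$ where $X$ is a Cantor space, $T:X\to X$ a homeomorphism, and every orbit $\{T^n x : n\in\mathbb Z\}$ is dense in $X$. For $x\in X$, a clopen $U\subseteq X$ and an integer $p\geq 1$, $\mathrm{PS}_p(x,U)=\{k\in\mathbb Z : T^{k+np}x\in U \text{ for all } n\in\mathbb Z\}$. *)

From Stdlib Require Import Reals ZArith.
Open Scope R_scope.

Set Implicit Arguments.

Record topology (X : Type) : Type := {
  is_open : (X -> Prop) -> Prop;
  open_full : is_open (fun _ => True);
  open_empty : is_open (fun _ => False);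
  open_inter : forall U V, is_open U -> is_open V -> is_open (fun x => U x /\ V x);
  open_union : forall (I : Type) (F : I -> X -> Prop),
      (forall i, is_open (F i)) -> is_open (fun x => exists i, F i x)
}.

Definition is_closed {X} (t : topology X) (A : X -> Prop) : Prop :=
  is_open t (fun x => ~ A x).

Definition is_clopen {X} (t : topology X) (A : X -> Prop) : Prop :=
  is_open t A /\ is_closed t A.

Definition compact {X} (t : topology X) : Prop :=
  forall (I : Type) (F : I -> X -> Prop),
    (forall i, is_open t (F i)) ->
    (forall x, exists i, F i x) ->
    exists l : list I, forall x, exists i, List.In i l /\ F i x.

Definition is_metric {X} (d : X -> X -> R) : Prop :=
  (forall x y, 0 <= d x y) /\
  (forall x y, d x y = 0 <-> x = y) /\
  (forall x y, d x y = d y x) /\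
  (forall x y z, d x z <= d x y + d y z).

Definition metric_open {X} (d : X -> X -> R) (U : X -> Prop) : Prop :=
  forall x, U x -> exists eps, 0 < eps /\ forall y, d x y < eps -> U y.

Definition metrizable {X} (t : topology X) : Prop :=
  exists d : X -> X -> R, is_metric d /\
    forall U, is_open t U <-> metric_open d U.

Definition connected_subset {X} (t : topology X) (A : X -> Prop) : Prop :=
  forall U V, is_open t U -> is_open t V ->
    (forall x, A x -> U x \/ V x) ->
    (forall x, A x -> ~ (U x /\ V x)) ->
    (forall x, A x -> U x) \/ (forall x, A x -> V x).

Definition totally_disconnected {X} (t : topology X) : Prop :=
  forall A, connected_subset t A -> forall x y, A x -> A y -> x = y.

Definition perfect {X} (t : topology X) : Prop :=
  forall x, ~ is_open t (fun y => y = x).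

Definition cantor_space {X} (t : topology X) : Prop :=
  inhabited X /\ compact t /\ metrizable t /\ totally_disconnected t /\ perfect t.

Definition continuous {X} (t : topology X) (f : X -> X) : Prop :=
  forall U, is_open t U -> is_open t (fun x => U (f x)).

Definition homeomorphism {X} (t : topology X) (T Tinv : X -> X) : Prop :=
  (forall x, Tinv (T x) = x) /\ (forall x, T (Tinv x) = x) /\
  continuous t T /\ continuous t Tinv.

Definition Tpow {X} (T Tinv : X -> X) (n : Z) (x : X) : X :=
  match n with
  | Z0 => x
  | Zpos p => Nat.iter (Pos.to_nat p) T x
  | Zneg p => Nat.iter (Pos.to_nat p) Tinv x
  end.

Definition dense {X} (t : topology X) (A : X -> Prop) : Prop :=
  forall V, is_open t V -> (exists y, V y) -> exists y, V y /\ A y.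

Definition orbit {X} (T Tinv : X -> X) (x : X) : X -> Prop :=
  fun y => exists n : Z, Tpow T Tinv n x = y.

Definition minimal_cantor_system {X} (t : topology X) (T Tinv : X -> X) : Prop :=
  cantor_space t /\ homeomorphism t T Tinv /\
  forall x, dense t (orbit T Tinv x).

Definition PS {X} (T Tinv : X -> X) (p : Z) (x : X) (U : X -> Prop) : Z -> Prop :=
  fun k => forall n : Z, U (Tpow T Tinv (k + n * p)%Z x).

Definition set_empty_Z (A : Z -> Prop) : Prop := forall k, ~ A k.

(* If T^k x stays in U along the whole progression k + pZ, then so does T^(k-m) (T^m x)
   for every m, hence some residue j in [0, p) belongs to PS_p(T^m x, U).  If instead
   PS_p(y, U) is empty, choose for each residue j < p an exponent with
   T^(j + n_j p) y outside U; the finitely many conditions T^(j + n_j p) w outside U cut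
   out an open neighbourhood of y, which the dense orbit of x must enter at some T^m x,
   contradicting the residue of k - m. *)
From Stdlib Require Import ZArith Lia ClassicalEpsilon FunctionalExtensionality
  PropExtensionality.

Set Implicit Arguments.

Section Powers.
Variables (X : Type) (T Tinv : X -> X).
Hypothesis TinvK : forall x, Tinv (T x) = x.
Hypothesis TK : forall x, T (Tinv x) = x.

Lemma Tpow_succ n x : Tpow T Tinv (Z.succ n) x = T (Tpow T Tinv n x).
Proof.
  destruct n as [|q|q]; [reflexivity| |].
  - unfold Z.succ. change (Z.pos q + 1)%Z with (Z.pos (q + 1)).
    simpl. rewrite Pos2Nat.inj_add, Nat.add_comm. reflexivity.
  - unfold Z.succ. destruct (Pos.succ_pred_or q) as [->|Hq].
    + simpl. rewrite TK. reflexivity.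
    + rewrite <- Hq. replace (Z.neg (Pos.succ (Pos.pred q)) + 1)%Z with (Z.neg (Pos.pred q)) by lia.
      unfold Tpow. rewrite Pos2Nat.inj_succ. simpl. rewrite TK. reflexivity.
Qed.

Lemma Tpow_pred n x : Tpow T Tinv (Z.pred n) x = Tinv (Tpow T Tinv n x).
Proof. rewrite <- (Z.succ_pred n) at 2. rewrite Tpow_succ, TinvK. reflexivity. Qed.

Lemma Tpow_add a b x : Tpow T Tinv a (Tpow T Tinv b x) = Tpow T Tinv (a + b) x.
Proof.
  induction a as [|a IHa|a IHa] using Z.peano_ind; [reflexivity| |].
  - rewrite Tpow_succ, IHa, <- Tpow_succ. f_equal. lia.
  - rewrite Tpow_pred, IHa, <- Tpow_pred. f_equal. lia.
Qed.

Lemma PS_Tpow_mod p x U k m : (0 < p)%Z ->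
  PS T Tinv p x U k -> PS T Tinv p (Tpow T Tinv m x) U ((k - m) mod p).
Proof.
  intros Hp Hk n. rewrite Tpow_add.
  replace ((k - m) mod p + n * p + m)%Z with (k + (n - (k - m) / p) * p)%Z.
  - apply Hk.
  - rewrite Z.mod_eq by lia. ring.
Qed.

Lemma PS_empty_witness p y U : set_empty_Z (PS T Tinv p y U) ->
  exists n : Z -> Z, forall j, ~ U (Tpow T Tinv (j + n j * p) y).
Proof.
  intros Hy.
  assert (Hj : forall j, exists n, ~ U (Tpow T Tinv (j + n * p) y))
    by (intro j; exact (not_all_ex_not _ _ (Hy j))).
  exists (fun j => proj1_sig (constructive_indefinite_description _ (Hj j))).
  intro j. exact (proj2_sig (constructive_indefinite_description _ (Hj j))).
Qed.

End Powers.

Section Topology.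
Variables (X : Type) (t : topology X).

Lemma is_open_ext {A B : X -> Prop} :
  is_open t A -> (forall x, A x <-> B x) -> is_open t B.
Proof.
  intros HA HAB. replace B with A; [exact HA|].
  apply functional_extensionality; intro x; apply propositional_extensionality, HAB.
Qed.

Lemma is_open_inter_interval (F : Z -> X -> Prop) (a : Z) :
  (forall j, is_open t (F j)) -> (0 <= a)%Z ->
  is_open t (fun x => forall j, (0 <= j < a)%Z -> F j x).
Proof.
  intros HF. revert a. apply natlike_ind.
  - apply (is_open_ext (open_full t)). intro x; split; [intros _ j Hj; lia | trivial].
  - intros a Ha IHa.
    apply (is_open_ext (open_inter t _ _ IHa (HF a))). intro x; split.
    + intros [Hx Ha'] j Hj. destruct (Z.eq_dec j a) as [->|Hne]; [exact Ha'|].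
      apply Hx; lia.
    + intros Hx. split; [intros j Hj; apply Hx; lia | apply Hx; lia].
Qed.

Lemma Tpow_continuous (T Tinv : X -> X) :
  homeomorphism t T Tinv -> forall n, continuous t (Tpow T Tinv n).
Proof.
  intros [TinvK [TK [cT cTinv]]] n.
  induction n as [|n IHn|n IHn] using Z.peano_ind; intros W HW; [exact HW| |].
  - apply (is_open_ext (IHn _ (cT W HW))). intro x. rewrite Tpow_succ; tauto.
  - apply (is_open_ext (IHn _ (cTinv W HW))). intro x. rewrite Tpow_pred; tauto.
Qed.

Lemma PS_nonempty_transfer (T Tinv : X -> X) (p : Z) (U : X -> Prop) (x y : X) (k : Z) :
  homeomorphism t T Tinv -> dense t (orbit T Tinv x) -> is_closed t U -> (0 < p)%Z ->
  PS T Tinv p x U k -> ~ set_empty_Z (PS T Tinv p y U).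
Proof.
  intros hT hdense hU Hp Hk Hy.
  pose proof hT as [TinvK [TK _]].
  apply PS_empty_witness in Hy as [n Hn].
  set (V := fun w => forall j, (0 <= j < p)%Z -> ~ U (Tpow T Tinv (j + n j * p) w)).
  assert (HV : is_open t V).
  { apply is_open_inter_interval; [|lia].
    intro j. exact (Tpow_continuous hT _ _ hU). }
  destruct (hdense V HV (ex_intro _ y (fun j _ => Hn j))) as [w [Vw [m <-]]].
  apply (Vw ((k - m) mod p)%Z); [apply Z.mod_pos_bound; lia|].
  exact (PS_Tpow_mod TinvK TK m Hp Hk _).
Qed.

End Topology.

Theorem mainTheorem2 (X : Type) (t : topology X) (T Tinv : X -> X)
  (hmin : minimal_cantor_system t T Tinv)
  (p : Z) (hp : (1 <= p)%Z) (U : X -> Prop) (hU : is_clopen t U) :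
  forall x y : X,
    set_empty_Z (PS T Tinv p x U) <-> set_empty_Z (PS T Tinv p y U).
Proof.
  destruct hmin as [_ [hT hdense]].
  assert (Hp : (0 < p)%Z) by lia.
  intros x y; split; intros Hempty k Hk.
  - exact (PS_nonempty_transfer hT (hdense y) (proj2 hU) Hp Hk Hempty).
  - exact (PS_nonempty_transfer hT (hdense x) (proj2 hU) Hp Hk Hempty).
Qed.
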